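(* Let $1<a_1<a_2$ be coprime integers and $S=\langle a_1,a_2\rangle$. For all $t\in(1,\infty)$, $\Delta_t(S)$ is dense in $[|a_1a_2P(t)|,a_2]$, i.e. $[|a_1a_2P(t)|,a_2]$ is contained in the closure of $\Delta_t(S)$.
   Context: $S=\{\lambda_1a_1+\lambda_2a_2:\lambda_1,\lambda_2\in\mathbb{N}_0\}$. For $t\in[1,\infty)$ and $(u,v)\in\mathbb{R}^2$, $\|(u,v)\|_t=(|u|^t+|v|^t)^{1/t}$. For $x\in S$, $Z(x)=\{(m,n)\in\mathbb{N}_0^2: ma_1+na_2=x\}$, $\mathscr{L}_t(x)=\{\|f\|_t: f\in Z(x)\}$, $\Delta_t(x)$ is the set of differences between consecutive elements of $\mathscr{L}_t(x)$ (in increasing order), and $\Delta_t(S)=\bigcup_{x\in S}\Delta_t(x)$. Define $\mu_t(r)=\left\|\left(\frac{1-r}{a_1},\frac{r}{a_2}\right)\right\|_t$ for $r\in[0,1]$, $r_0(t)=\min\{r\in[0,1]:\mu_t(r)=\frac{1}{a_2}\}$, and $P(t)=\mu_t'(r_0(t))$ (derivative in $r$). *)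

From Stdlib Require Import Reals Lra Arith.
From Coquelicot Require Import Coquelicot.
Open Scope R_scope.

Definition rpow (x y : R) : R := if Rle_dec x 0 then 0 else Rpower x y.

Definition tnorm (t u v : R) : R :=
  rpow (rpow (Rabs u) t + rpow (Rabs v) t) (1 / t).

Definition inS (a1 a2 x : nat) : Prop :=
  exists l1 l2 : nat, x = (l1 * a1 + l2 * a2)%nat.

Definition factorization (a1 a2 x m n : nat) : Prop :=
  (m * a1 + n * a2)%nat = x.

Definition in_Lt (a1 a2 : nat) (t : R) (x : nat) (l : R) : Prop :=
  exists m n : nat, factorization a1 a2 x m n /\ l = tnorm t (INR m) (INR n).

Definition in_Delta_x (a1 a2 : nat) (t : R) (x : nat) (d : R) : Prop :=
  exists l1 l2 : R, in_Lt a1 a2 t x l1 /\ in_Lt a1 a2 t x l2 /\ l1 < l2 /\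
    (forall l, in_Lt a1 a2 t x l -> ~ (l1 < l < l2)) /\ d = l2 - l1.

Definition in_Delta_S (a1 a2 : nat) (t : R) (d : R) : Prop :=
  exists x : nat, inS a1 a2 x /\ in_Delta_x a1 a2 t x d.

Definition mu (a1 a2 : nat) (t r : R) : R :=
  tnorm t ((1 - r) / INR a1) (r / INR a2).

(* r0(t) = min { r in [0,1] : mu_t(r) = 1/a2 } (the set is closed, nonempty
   since r = 1 belongs to it, so its infimum is its minimum) *)
Definition r0 (a1 a2 : nat) (t : R) : R :=
  real (Glb_Rbar (fun r => 0 <= r <= 1 /\ mu a1 a2 t r = 1 / INR a2)).

Definition P (a1 a2 : nat) (t : R) : R := Derive (mu a1 a2 t) (r0 a1 a2 t).

From Stdlib Require Import Reals Lra Lia Arith.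
From Coquelicot Require Import Coquelicot.
Open Scope R_scope.

(* On [0,1], mu_t decreases strictly up to its minimiser and increases after
   it; r0 is the point of the decreasing branch where mu_t = mu_t(1) = 1/a2.
   For x = a1 a2 M the factorizations of x are (a2 (M - q), a1 q), 0 <= q <= M,
   of length x mu_t(q/M).  While (q+1)/M <= r0 the lengths at q and q+1 are
   consecutive in L_t(x), and by the mean value theorem their difference is
   -a1 a2 mu_t'(c) for some c in [q/M, (q+1)/M].  As M grows these c fill
   [0, r0], and -a1 a2 mu_t' maps [0, r0] continuously onto an interval
   containing [a1 a2 |P(t)|, a2], its value at 0 being a2. *)

Lemma rpow_pos x s : 0 < x -> rpow x s = Rpower x s.
Proof. intros Hx; unfold rpow; destruct (Rle_dec x 0); [lra | reflexivity]. Qed.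

Lemma rpow_nonpos x s : x <= 0 -> rpow x s = 0.
Proof. intros Hx; unfold rpow; destruct (Rle_dec x 0); [reflexivity | lra]. Qed.

Lemma rpow_ge0 x s : 0 <= rpow x s.
Proof. unfold rpow; destruct (Rle_dec x 0); [lra | left; apply exp_pos]. Qed.

Lemma rpow_gt0 x s : 0 < x -> 0 < rpow x s.
Proof. intros Hx; rewrite rpow_pos by exact Hx; apply exp_pos. Qed.

Lemma rpow_lt x y s : 0 < s -> 0 <= x < y -> rpow x s < rpow y s.
Proof.
  intros Hs Hxy. destruct (Req_dec x 0) as [-> | Hx].
  - rewrite rpow_nonpos by lra. apply rpow_gt0; lra.
  - rewrite !rpow_pos by lra. apply Rlt_Rpower_l; lra.
Qed.

Lemma rpow_mult_pos_l c x s : 0 < c -> 0 <= x -> rpow (c * x) s = Rpower c s * rpow x s.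
Proof.
  intros Hc [Hx | <-].
  - rewrite !rpow_pos by nra. rewrite Rpower_mult_distr; lra.
  - rewrite Rmult_0_r, rpow_nonpos by lra. ring.
Qed.

Lemma rpow_rpow_inv x s : 0 < s -> 0 <= x -> rpow (rpow x s) (1 / s) = x.
Proof.
  intros Hs [Hx | <-].
  - rewrite (rpow_pos x) by lra. rewrite rpow_pos by apply exp_pos.
    rewrite Rpower_mult. replace (s * (1 / s)) with 1 by (field; lra). apply Rpower_1; lra.
  - rewrite (rpow_nonpos 0 s), rpow_nonpos; lra.
Qed.

Lemma Rpower_pred x s : 0 < x -> Rpower x (s - 1) = Rpower x s / x.
Proof.
  intros Hx. unfold Rminus. rewrite Rpower_plus, Rpower_Ropp, Rpower_1 by exact Hx.
  reflexivity.
Qed.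

Lemma rpow_continuous_pos s x : 0 < x -> continuous (fun z => rpow z s) x.
Proof.
  intros Hx. apply continuous_ext_loc with (g := fun z => exp (s * ln z)).
  - apply locally_interval with (a := Finite 0) (b := p_infty); simpl; auto.
    intros y Hy _. rewrite rpow_pos by exact Hy. reflexivity.
  - apply (@ex_derive_continuous R_AbsRing R_NormedModule). auto_derive. lra.
Qed.

Lemma rpow_continuous_0 s : 0 < s -> continuous (fun z => rpow z s) 0.
Proof.
  intros Hs. unfold continuous. rewrite (rpow_nonpos 0 s) by lra.
  apply filterlim_locally. intros eps.
  (* [z^s < eps] as soon as [0 < z < eps^(1/s)] *)
  exists (mkposreal (exp (ln eps / s)) (exp_pos _)).
  intros z Hz. change (Rabs (z - 0) < exp (ln eps / s)) in Hz.
  change (Rabs (rpow z s - 0) < eps). rewrite Rminus_0_r in *.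
  destruct (Rle_dec z 0) as [Hz0 | Hz0].
  - rewrite rpow_nonpos, Rabs_R0 by exact Hz0. apply cond_pos.
  - rewrite rpow_pos, Rabs_pos_eq by (try left; try apply exp_pos; lra).
    rewrite Rabs_pos_eq in Hz by lra.
    assert (Hln : ln z < ln eps / s).
    { rewrite <- (ln_exp (ln eps / s)). apply ln_increasing; lra. }
    rewrite <- (exp_ln eps) by apply cond_pos. apply exp_increasing.
    apply (Rmult_lt_compat_l s) in Hln; [| exact Hs].
    replace (s * (ln eps / s)) with (ln eps) in Hln by (field; lra). exact Hln.
Qed.

Lemma rpow_continuous s x : 0 < s -> continuous (fun z => rpow z s) x.
Proof.
  intros Hs. destruct (Rtotal_order x 0) as [Hx | [-> | Hx]].
  - apply continuous_ext_loc with (g := fun _ => 0).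
    + apply locally_interval with (a := m_infty) (b := Finite 0); simpl; auto.
      intros y _ Hy. rewrite rpow_nonpos; lra.
    + apply continuous_const.
  - apply rpow_continuous_0, Hs.
  - apply rpow_continuous_pos, Hx.
Qed.

Lemma rpow_abs_continuous (f : R -> R) s x :
  0 < s -> continuous f x -> continuous (fun r => rpow (Rabs (f r)) s) x.
Proof.
  intros Hs Hf. apply (continuous_comp (fun r => Rabs (f r)) (fun z => rpow z s)).
  - apply continuous_Rabs_comp, Hf.
  - apply rpow_continuous, Hs.
Qed.

Lemma tnorm_scal t c u v : 0 < t -> 0 < c -> tnorm t (c * u) (c * v) = c * tnorm t u v.
Proof.
  intros Ht Hc. unfold tnorm.
  rewrite !Rabs_mult, !(Rabs_pos_eq c) by lra.
  rewrite !rpow_mult_pos_l, <- Rmult_plus_distr_l by (try apply Rabs_pos; lra).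
  rewrite rpow_mult_pos_l by (try apply exp_pos;
    pose proof (rpow_ge0 (Rabs u) t); pose proof (rpow_ge0 (Rabs v) t); lra).
  rewrite Rpower_mult. replace (t * (1 / t)) with 1 by (field; lra).
  rewrite Rpower_1 by exact Hc. reflexivity.
Qed.

Lemma tnorm_0_r t u : 0 < t -> tnorm t u 0 = Rabs u.
Proof.
  intros Ht. unfold tnorm. rewrite Rabs_R0, (rpow_nonpos 0), Rplus_0_r by lra.
  apply rpow_rpow_inv; [exact Ht | apply Rabs_pos].
Qed.

Lemma tnorm_0_l t v : 0 < t -> tnorm t 0 v = Rabs v.
Proof.
  intros Ht. unfold tnorm. rewrite Rabs_R0, (rpow_nonpos 0), Rplus_0_l by lra.
  apply rpow_rpow_inv; [exact Ht | apply Rabs_pos].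
Qed.

Lemma derive_neg_strict_decreasing (f df : R -> R) a b :
  (forall x, a < x < b -> is_derive f x (df x)) ->
  (forall x, a <= x <= b -> continuous f x) ->
  (forall x, a <= x <= b -> df x <= 0) ->
  (forall x, a < x < b -> df x < 0) ->
  forall u v, a <= u -> u < v -> v <= b -> f v < f u.
Proof.
  intros Hd Hc Hle Hlt u v Hau Huv Hvb.
  assert (Hmvt : forall p q, a <= p < q -> q <= b ->
            exists c, p <= c <= q /\ f q - f p = df c * (q - p)).
  { intros p q Hpq Hq. destruct (MVT_gen f p q df) as [c [Hcpq E]].
    - intros x Hx. rewrite Rmin_left, Rmax_right in Hx by lra. apply Hd; lra.
    - intros x Hx. rewrite Rmin_left, Rmax_right in Hx by lra.
      apply continuity_pt_filterlim, Hc; lra.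
    - rewrite Rmin_left, Rmax_right in Hcpq by lra. exists c; split; assumption. }
  (* the middle third stays away from the endpoints, where [df] may vanish *)
  set (w1 := (2 * u + v) / 3). set (w2 := (u + 2 * v) / 3).
  destruct (Hmvt u w1) as [c1 [Hc1 E1]]; [unfold w1; lra | unfold w1; lra |].
  destruct (Hmvt w1 w2) as [c2 [Hc2 E2]]; [unfold w1, w2; lra | unfold w2; lra |].
  destruct (Hmvt w2 v) as [c3 [Hc3 E3]]; [unfold w2; lra | lra |].
  assert (df c1 <= 0) by (apply Hle; unfold w1, w2 in *; lra).
  assert (df c2 < 0) by (apply Hlt; unfold w1, w2 in *; lra).
  assert (df c3 <= 0) by (apply Hle; unfold w1, w2 in *; lra).
  unfold w1, w2 in *. nra.
Qed.

Definition mu_powsum (a1 a2 : nat) (t r : R) : R :=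
  rpow (Rabs ((1 - r) / INR a1)) t + rpow (Rabs (r / INR a2)) t.

(* The sign of [dmu]; it is strictly increasing, which makes [mu] unimodal. *)
Definition mu_balance (a1 a2 : nat) (t r : R) : R :=
  rpow (Rabs (r / INR a2)) (t - 1) / INR a2 - rpow (Rabs ((1 - r) / INR a1)) (t - 1) / INR a1.

Definition dmu (a1 a2 : nat) (t r : R) : R :=
  rpow (mu_powsum a1 a2 t r) (1 / t - 1) * mu_balance a1 a2 t r.

Section Mu.

Variables (a1 a2 : nat) (t : R).
Hypotheses (a1_pos : (0 < a1)%nat) (a1_lt_a2 : (a1 < a2)%nat) (t_gt1 : 1 < t).

Let a1_posR : 0 < INR a1.
Proof. apply lt_0_INR; exact a1_pos. Qed.

Let a1_lt_a2R : INR a1 < INR a2.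
Proof. apply lt_INR; exact a1_lt_a2. Qed.

Let left_continuous r : continuous (fun x => (1 - x) / INR a1) r.
Proof. apply (@ex_derive_continuous R_AbsRing R_NormedModule). auto_derive. lra. Qed.

Let right_continuous r : continuous (fun x => x / INR a2) r.
Proof. apply (@ex_derive_continuous R_AbsRing R_NormedModule). auto_derive. lra. Qed.

Lemma mu_0 : mu a1 a2 t 0 = 1 / INR a1.
Proof.
  unfold mu. rewrite Rdiv_0_l, tnorm_0_r, Rminus_0_r by lra.
  apply Rabs_pos_eq, Rlt_le, Rdiv_lt_0_compat; lra.
Qed.

Lemma mu_1 : mu a1 a2 t 1 = 1 / INR a2.
Proof.
  unfold mu. replace (1 - 1) with 0 by ring. rewrite Rdiv_0_l, tnorm_0_l by lra.
  apply Rabs_pos_eq, Rlt_le, Rdiv_lt_0_compat; lra.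
Qed.

Lemma mu_powsum_pos r : 0 < mu_powsum a1 a2 t r.
Proof.
  unfold mu_powsum.
  pose proof (rpow_ge0 (Rabs ((1 - r) / INR a1)) t). pose proof (rpow_ge0 (Rabs (r / INR a2)) t).
  destruct (Req_dec r 0) as [-> | Hr].
  - enough (0 < rpow (Rabs ((1 - 0) / INR a1)) t) by lra.
    rewrite Rminus_0_r. apply rpow_gt0, Rabs_pos_lt, Rgt_not_eq, Rdiv_lt_0_compat; lra.
  - enough (0 < rpow (Rabs (r / INR a2)) t) by lra.
    apply rpow_gt0, Rabs_pos_lt. unfold Rdiv.
    apply Rmult_integral_contrapositive_currified; [exact Hr | apply Rinv_neq_0_compat; lra].
Qed.

Lemma mu_powsum_continuous r : continuous (mu_powsum a1 a2 t) r.
Proof.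
  apply (continuous_plus (fun x => rpow (Rabs ((1 - x) / INR a1)) t)
                         (fun x => rpow (Rabs (x / INR a2)) t));
    apply rpow_abs_continuous; auto; lra.
Qed.

Lemma mu_continuous r : continuous (mu a1 a2 t) r.
Proof.
  apply (continuous_comp (mu_powsum a1 a2 t) (fun z => rpow z (1 / t))).
  - apply mu_powsum_continuous.
  - apply rpow_continuous, Rdiv_lt_0_compat; lra.
Qed.

Lemma mu_balance_continuous r : continuous (mu_balance a1 a2 t) r.
Proof.
  apply (continuous_minus (fun x => rpow (Rabs (x / INR a2)) (t - 1) / INR a2)
                          (fun x => rpow (Rabs ((1 - x) / INR a1)) (t - 1) / INR a1));
    [apply (continuous_mult (fun x => rpow (Rabs (x / INR a2)) (t - 1)) (fun _ => / INR a2))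
    |apply (continuous_mult (fun x => rpow (Rabs ((1 - x) / INR a1)) (t - 1)) (fun _ => / INR a1))];
    try apply continuous_const; apply rpow_abs_continuous; auto; lra.
Qed.

Lemma dmu_continuous r : continuous (dmu a1 a2 t) r.
Proof.
  apply (continuous_mult (fun x => rpow (mu_powsum a1 a2 t x) (1 / t - 1)) (mu_balance a1 a2 t)).
  - apply (continuous_comp (mu_powsum a1 a2 t) (fun z => rpow z (1 / t - 1))).
    + apply mu_powsum_continuous.
    + apply rpow_continuous_pos, mu_powsum_pos.
  - apply mu_balance_continuous.
Qed.

Lemma mu_is_derive r : 0 < r < 1 -> is_derive (mu a1 a2 t) r (dmu a1 a2 t r).
Proof.
  intros Hr.
  apply is_derive_ext_loc with (f := fun z =>
    Rpower (Rpower ((1 - z) / INR a1) t + Rpower (z / INR a2) t) (1 / t)).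
  - apply locally_interval with (a := Finite 0) (b := Finite 1); simpl; try lra.
    intros z Hz0 Hz1. unfold mu, tnorm.
    assert (0 < (1 - z) / INR a1) by (apply Rdiv_lt_0_compat; lra).
    assert (0 < z / INR a2) by (apply Rdiv_lt_0_compat; lra).
    rewrite !Rabs_pos_eq, (rpow_pos ((1 - z) / INR a1)), (rpow_pos (z / INR a2)) by lra.
    rewrite rpow_pos by (apply Rplus_lt_0_compat; apply exp_pos).
    reflexivity.
  - assert (Hu : 0 < (1 - r) / INR a1) by (apply Rdiv_lt_0_compat; lra).
    assert (Hv : 0 < r / INR a2) by (apply Rdiv_lt_0_compat; lra).
    unfold dmu, mu_powsum, mu_balance.
    rewrite !Rabs_pos_eq, !(rpow_pos ((1 - r) / INR a1)), !(rpow_pos (r / INR a2)) by lra.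
    rewrite rpow_pos by (apply Rplus_lt_0_compat; apply exp_pos).
    rewrite !Rpower_pred by (lra || (apply Rplus_lt_0_compat; apply exp_pos)).
    unfold Rpower. pose proof (exp_pos (t * ln ((1 - r) / INR a1))).
    pose proof (exp_pos (t * ln (r / INR a2))).
    auto_derive; change ((1 + - r) * / INR a1) with ((1 - r) / INR a1);
      change (r * / INR a2) with (r / INR a2).
    + lra.
    + field. lra.
Qed.

Lemma dmu_0 : dmu a1 a2 t 0 = - (1 / INR a1).
Proof.
  assert (H : 0 < 1 / INR a1) by (apply Rdiv_lt_0_compat; lra).
  unfold dmu, mu_powsum, mu_balance.
  rewrite Rdiv_0_l, Rabs_R0, !(rpow_nonpos 0), Rdiv_0_l, Rminus_0_r, Rplus_0_r by lra.
  rewrite Rabs_pos_eq, !(rpow_pos (1 / INR a1)) by lra.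
  rewrite rpow_pos, Rpower_mult by apply exp_pos.
  replace (t * (1 / t - 1)) with (- (t - 1)) by (field; lra).
  rewrite Rpower_Ropp. pose proof (exp_pos ((t - 1) * ln (1 / INR a1))).
  unfold Rpower in *. field. lra.
Qed.

Lemma mu_balance_increasing u v : 0 <= u -> u < v -> v <= 1 ->
  mu_balance a1 a2 t u < mu_balance a1 a2 t v.
Proof.
  intros Hu Huv Hv. unfold mu_balance.
  assert (Ha1 : 0 < / INR a1) by (apply Rinv_0_lt_compat; lra).
  assert (Ha2 : 0 < / INR a2) by (apply Rinv_0_lt_compat; lra).
  rewrite !Rabs_pos_eq by (apply Rmult_le_pos; lra).
  assert (rpow (u / INR a2) (t - 1) < rpow (v / INR a2) (t - 1)).
  { apply rpow_lt; [lra |]. split; [apply Rmult_le_pos | apply Rmult_lt_compat_r]; lra. }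
  assert (rpow ((1 - v) / INR a1) (t - 1) < rpow ((1 - u) / INR a1) (t - 1)).
  { apply rpow_lt; [lra |]. split; [apply Rmult_le_pos | apply Rmult_lt_compat_r]; lra. }
  unfold Rdiv at 1 3 5 7. nra.
Qed.

Lemma mu_balance_0 : mu_balance a1 a2 t 0 < 0.
Proof.
  unfold mu_balance. rewrite Rdiv_0_l, Rabs_R0, rpow_nonpos, Rdiv_0_l by lra.
  enough (0 < rpow (Rabs ((1 - 0) / INR a1)) (t - 1) / INR a1) by lra.
  apply Rdiv_lt_0_compat; [| lra]. rewrite Rminus_0_r.
  apply rpow_gt0, Rabs_pos_lt, Rgt_not_eq, Rdiv_lt_0_compat; lra.
Qed.

Lemma mu_balance_1 : 0 < mu_balance a1 a2 t 1.
Proof.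
  unfold mu_balance. replace (1 - 1) with 0 by ring.
  rewrite Rdiv_0_l, Rabs_R0, (rpow_nonpos 0), Rdiv_0_l by lra.
  enough (0 < rpow (Rabs (1 / INR a2)) (t - 1) / INR a2) by lra.
  apply Rdiv_lt_0_compat; [| lra].
  apply rpow_gt0, Rabs_pos_lt, Rgt_not_eq, Rdiv_lt_0_compat; lra.
Qed.

Lemma mu_balance_root : exists rm, 0 < rm < 1 /\ mu_balance a1 a2 t rm = 0.
Proof.
  pose proof mu_balance_0. pose proof mu_balance_1.
  destruct (IVT_gen (mu_balance a1 a2 t) 0 1 0) as [rm [Hrm Hroot]].
  - intros x. apply continuity_pt_filterlim, mu_balance_continuous.
  - rewrite Rmin_left, Rmax_right; lra.
  - rewrite Rmin_left, Rmax_right in Hrm by lra.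
    exists rm. split; [| exact Hroot].
    split; apply Rnot_le_lt; intros Hle;
      [replace rm with 0 in Hroot | replace rm with 1 in Hroot]; lra.
Qed.

Let dmu_factor_pos r : 0 < rpow (mu_powsum a1 a2 t r) (1 / t - 1).
Proof. apply rpow_gt0, mu_powsum_pos. Qed.

Section Critical.

(* [rm] is the minimiser of [mu] on [0,1]. *)
Variable rm : R.
Hypotheses (rm_range : 0 < rm < 1) (mu_balance_rm : mu_balance a1 a2 t rm = 0).

Lemma mu_decreasing_to_rm u v : 0 <= u -> u < v -> v <= rm ->
  mu a1 a2 t v < mu a1 a2 t u.
Proof.
  apply (derive_neg_strict_decreasing (mu a1 a2 t) (dmu a1 a2 t) 0 rm).
  - intros x Hx. apply mu_is_derive; lra.
  - intros x _. apply mu_continuous.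
  - intros x Hx. unfold dmu. pose proof (dmu_factor_pos x).
    destruct (Req_dec x rm) as [-> | Hne]; [rewrite mu_balance_rm; lra |].
    pose proof (mu_balance_increasing x rm). nra.
  - intros x Hx. unfold dmu. pose proof (dmu_factor_pos x).
    pose proof (mu_balance_increasing x rm). nra.
Qed.

Lemma mu_increasing_from_rm u v : rm <= u -> u < v -> v <= 1 ->
  mu a1 a2 t u < mu a1 a2 t v.
Proof.
  intros Hu Huv Hv. apply Ropp_lt_cancel.
  apply (derive_neg_strict_decreasing (fun r => - mu a1 a2 t r) (fun r => - dmu a1 a2 t r) rm 1);
    try assumption.
  - intros x Hx. apply (is_derive_opp (mu a1 a2 t)), mu_is_derive; lra.
  - intros x _. apply (continuous_opp (mu a1 a2 t)), mu_continuous.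
  - intros x Hx. unfold dmu. pose proof (dmu_factor_pos x).
    destruct (Req_dec x rm) as [-> | Hne]; [rewrite mu_balance_rm; lra |].
    pose proof (mu_balance_increasing rm x). nra.
  - intros x Hx. unfold dmu. pose proof (dmu_factor_pos x).
    pose proof (mu_balance_increasing rm x). nra.
Qed.

Lemma r0_spec_rm : 0 < r0 a1 a2 t < rm /\ mu a1 a2 t (r0 a1 a2 t) = 1 / INR a2.
Proof.
  assert (Hrm : mu a1 a2 t rm < 1 / INR a2).
  { rewrite <- mu_1. apply mu_increasing_from_rm; lra. }
  assert (H0 : 1 / INR a2 < mu a1 a2 t 0).
  { rewrite mu_0. unfold Rdiv. rewrite !Rmult_1_l. apply Rinv_lt_contravar; nra. }
  destruct (IVT_gen (mu a1 a2 t) 0 rm (1 / INR a2)) as [r1 [Hr1 Hmu1]].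
  - intros x. apply continuity_pt_filterlim, mu_continuous.
  - rewrite Rmin_right, Rmax_left; lra.
  - rewrite Rmin_left, Rmax_right in Hr1 by lra.
    assert (Hr0 : r0 a1 a2 t = r1).
    { unfold r0. rewrite (is_glb_Rbar_unique _ (Finite r1)); [reflexivity | split].
      - intros r [Hr Hmr]. simpl. apply Rnot_lt_le. intros Hlt.
        pose proof (mu_decreasing_to_rm r r1). lra.
      - intros b Hb. apply Hb. split; [lra | exact Hmu1]. }
    rewrite Hr0. split; [| exact Hmu1].
    split; apply Rnot_le_lt; intros Hle;
      [replace r1 with 0 in Hmu1 | replace r1 with rm in Hmu1]; lra.
Qed.

End Critical.

Lemma r0_spec :
  0 < r0 a1 a2 t < 1 /\
  (forall u v, 0 <= u -> u < v -> v <= r0 a1 a2 t -> mu a1 a2 t v < mu a1 a2 t u) /\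
  (forall r, r0 a1 a2 t <= r <= 1 -> mu a1 a2 t r <= mu a1 a2 t (r0 a1 a2 t)).
Proof.
  destruct mu_balance_root as [rm [Hrm Hbal]].
  destruct (r0_spec_rm rm Hrm Hbal) as [Hr0 Hmu0].
  split; [lra | split].
  - intros u v Hu Huv Hv. apply (mu_decreasing_to_rm rm); lra.
  - intros r Hr. destruct (Rle_lt_dec r rm) as [Hle | Hlt].
    + destruct (Req_dec r (r0 a1 a2 t)) as [-> | Hne]; [lra |].
      left. apply (mu_decreasing_to_rm rm); lra.
    + rewrite Hmu0, <- mu_1. destruct (Req_dec r 1) as [-> | Hne]; [lra |].
      left. apply (mu_increasing_from_rm rm); lra.
Qed.

Lemma P_eq_dmu : P a1 a2 t = dmu a1 a2 t (r0 a1 a2 t).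
Proof.
  unfold P. apply is_derive_unique, mu_is_derive. destruct r0_spec as [Hr0 _]. exact Hr0.
Qed.

Lemma mu_mvt u v : 0 <= u -> u <= v -> v <= 1 ->
  exists c, u <= c <= v /\ mu a1 a2 t v - mu a1 a2 t u = dmu a1 a2 t c * (v - u).
Proof.
  intros Hu Huv Hv. destruct (MVT_gen (mu a1 a2 t) u v (dmu a1 a2 t)) as [c [Hc E]].
  - intros x Hx. rewrite Rmin_left, Rmax_right in Hx by lra. apply mu_is_derive; lra.
  - intros x _. apply continuity_pt_filterlim, mu_continuous.
  - rewrite Rmin_left, Rmax_right in Hc by lra. exists c. split; assumption.
Qed.

Lemma dmu_attains y : Rabs (INR a1 * INR a2 * P a1 a2 t) <= y <= INR a2 ->
  exists r, 0 <= r <= r0 a1 a2 t /\ INR a1 * INR a2 * dmu a1 a2 t r = - y.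
Proof.
  intros Hy. destruct r0_spec as [Hr0 _].
  assert (Hk : 0 < INR a1 * INR a2) by (apply Rmult_lt_0_compat; lra).
  rewrite P_eq_dmu in Hy.
  pose proof (Rle_abs (- (INR a1 * INR a2 * dmu a1 a2 t (r0 a1 a2 t)))) as Habs.
  rewrite Rabs_Ropp in Habs.
  assert (Htarget : dmu a1 a2 t 0 <= - y / (INR a1 * INR a2) <= dmu a1 a2 t (r0 a1 a2 t)).
  { rewrite dmu_0.
    split; apply (Rmult_le_reg_l (INR a1 * INR a2)); try exact Hk;
      replace (INR a1 * INR a2 * (- y / (INR a1 * INR a2))) with (- y) by (field; lra).
    - replace (INR a1 * INR a2 * - (1 / INR a1)) with (- INR a2) by (field; lra). lra.
    - lra. }
  destruct (IVT_gen (dmu a1 a2 t) 0 (r0 a1 a2 t) (- y / (INR a1 * INR a2))) as [r [Hr Hdr]].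
  - intros x. apply continuity_pt_filterlim, dmu_continuous.
  - rewrite Rmin_left, Rmax_right; lra.
  - rewrite Rmin_left, Rmax_right in Hr by lra.
    exists r. split; [exact Hr |]. rewrite Hdr. field. lra.
Qed.

End Mu.

Lemma grid_index (M : nat) r b : (0 < M)%nat -> 0 <= r <= b -> / INR M <= b ->
  exists i : nat, INR (S i) / INR M <= b /\ INR i / INR M <= r < (INR i + 2) / INR M.
Proof.
  intros HM Hr Hb. assert (HMR : 0 < INR M) by (apply lt_0_INR, HM).
  assert (HbM : 1 <= b * INR M).
  { replace 1 with (/ INR M * INR M) by (field; lra). apply Rmult_le_compat_r; lra. }
  assert (HrM : r * INR M <= b * INR M) by (apply Rmult_le_compat_r; lra).
  destruct (nfloor_ex (r * INR M)) as [[| i] Hn];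
    [apply Rmult_le_pos; lra | exists 0%nat | exists i];
    rewrite ?S_INR in *; simpl INR in *;
    (split; [apply Rle_div_l; lra | split; [apply Rle_div_l | apply Rlt_div_r]; lra]).
Qed.

Section Density.

Variables (a1 a2 : nat) (t : R).
Hypotheses (a1_pos : (0 < a1)%nat) (a1_lt_a2 : (a1 < a2)%nat)
  (coprime_a1_a2 : Nat.gcd a1 a2 = 1%nat) (t_gt1 : 1 < t).

Lemma factorization_of_multiple M m n : factorization a1 a2 (a1 * a2 * M) m n ->
  exists q, (q <= M)%nat /\ m = (a2 * (M - q))%nat /\ n = (a1 * q)%nat.
Proof.
  unfold factorization. intros Hf.
  assert (Hdiv : Nat.divide a1 n).
  { apply (Nat.gauss a1 a2 n); [| exact coprime_a1_a2].
    apply (Nat.divide_add_cancel_r a1 (m * a1)); [apply Nat.divide_factor_r |].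
    rewrite (Nat.mul_comm a2 n), Hf, <- Nat.mul_assoc. apply Nat.divide_factor_l. }
  destruct Hdiv as [q ->]. exists q.
  assert (Hq : (q <= M)%nat).
  { apply (Nat.mul_le_mono_pos_r _ _ (a1 * a2)); nia. }
  split; [exact Hq | split; [| ring]].
  destruct (Nat.le_exists_sub q M Hq) as [p [-> _]]. rewrite Nat.add_sub.
  apply (Nat.mul_cancel_r _ _ a1); [lia | nia].
Qed.

Lemma in_Lt_multiple M l : (0 < M)%nat ->
  in_Lt a1 a2 t (a1 * a2 * M) l <->
  exists q, (q <= M)%nat /\ l = INR (a1 * a2 * M) * mu a1 a2 t (INR q / INR M).
Proof.
  intros HM.
  assert (Hx : (0 < a1 * a2 * M)%nat) by (apply Nat.mul_pos_pos; [apply Nat.mul_pos_pos |]; lia).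
  assert (Hpos : forall k, (0 < k)%nat -> INR k <> 0) by (intros k Hk; apply not_0_INR; lia).
  assert (Hlength : forall q, (q <= M)%nat ->
    tnorm t (INR (a2 * (M - q))) (INR (a1 * q)) = INR (a1 * a2 * M) * mu a1 a2 t (INR q / INR M)).
  { intros q Hq. unfold mu. rewrite <- tnorm_scal by (lra || apply lt_0_INR, Hx).
    rewrite !mult_INR, minus_INR by exact Hq.
    pose proof (Hpos a1 a1_pos). pose proof (Hpos a2 ltac:(lia)). pose proof (Hpos M HM).
    f_equal; field; auto. }
  split.
  - intros [m [n [Hf ->]]].
    destruct (factorization_of_multiple M m n Hf) as [q [Hq [-> ->]]].
    exists q. split; [exact Hq | apply Hlength, Hq].
  - intros [q [Hq ->]]. exists (a2 * (M - q))%nat, (a1 * q)%nat.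
    split; [unfold factorization; nia | symmetry; apply Hlength, Hq].
Qed.

Lemma mu_grid_not_between M i q : (0 < M)%nat -> INR (S i) / INR M <= r0 a1 a2 t ->
  (q <= M)%nat ->
  mu a1 a2 t (INR q / INR M) <= mu a1 a2 t (INR (S i) / INR M) \/
  mu a1 a2 t (INR i / INR M) <= mu a1 a2 t (INR q / INR M).
Proof.
  intros HM Hi Hq.
  destruct (r0_spec a1 a2 t a1_pos a1_lt_a2 t_gt1) as [Hr0 [Hdec Hafter]].
  assert (Hmono : forall u v, 0 <= u -> u <= v -> v <= r0 a1 a2 t -> mu a1 a2 t v <= mu a1 a2 t u).
  { intros u v Hu Huv Hv. destruct (Req_dec u v) as [-> | Hne]; [lra |].
    left. apply Hdec; lra. }
  assert (HMR : 0 < INR M) by (apply lt_0_INR, HM).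
  assert (Hgrid_le : forall m n, (m <= n)%nat -> INR m / INR M <= INR n / INR M).
  { intros m n Hmn.
    apply Rmult_le_compat_r; [left; apply Rinv_0_lt_compat, HMR | apply le_INR, Hmn]. }
  assert (Hgrid_ge0 : forall n, 0 <= INR n / INR M).
  { intros n. apply Rdiv_le_0_compat; [apply pos_INR | exact HMR]. }
  assert (HqM : INR q / INR M <= 1).
  { replace 1 with (INR M / INR M) by (field; lra). apply Hgrid_le, Hq. }
  destruct (le_lt_dec q i) as [Hqi | Hiq].
  - right. apply Hmono; [apply Hgrid_ge0 | apply Hgrid_le, Hqi |].
    pose proof (Hgrid_le i (S i) ltac:(lia)). lra.
  - left. destruct (Rle_lt_dec (INR q / INR M) (r0 a1 a2 t)).
    + apply Hmono; auto.
    + apply Rle_trans with (mu a1 a2 t (r0 a1 a2 t)); [apply Hafter; lra | apply Hmono; auto; lra].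
Qed.

Lemma in_Delta_S_grid_step M i : (0 < M)%nat -> INR (S i) / INR M <= r0 a1 a2 t ->
  in_Delta_S a1 a2 t
    (INR (a1 * a2 * M) * (mu a1 a2 t (INR i / INR M) - mu a1 a2 t (INR (S i) / INR M))).
Proof.
  intros HM Hi.
  destruct (r0_spec a1 a2 t a1_pos a1_lt_a2 t_gt1) as [Hr0 [Hdec _]].
  assert (HMR : 0 < INR M) by (apply lt_0_INR, HM).
  assert (Hx : 0 < INR (a1 * a2 * M)).
  { apply lt_0_INR, Nat.mul_pos_pos; [apply Nat.mul_pos_pos |]; lia. }
  assert (HiM : (S i <= M)%nat).
  { apply INR_le. replace (INR (S i)) with (INR (S i) / INR M * INR M) by (field; lra). nra. }
  assert (Hstep : INR i / INR M < INR (S i) / INR M).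
  { apply Rmult_lt_compat_r; [apply Rinv_0_lt_compat, HMR | apply lt_INR; lia]. }
  assert (Hi0 : 0 <= INR i / INR M) by (apply Rdiv_le_0_compat; [apply pos_INR | exact HMR]).
  exists (a1 * a2 * M)%nat. split; [exists (a2 * M)%nat, 0%nat; ring |].
  exists (INR (a1 * a2 * M) * mu a1 a2 t (INR (S i) / INR M)),
         (INR (a1 * a2 * M) * mu a1 a2 t (INR i / INR M)).
  split; [apply in_Lt_multiple; [exact HM | exists (S i); split; [exact HiM | reflexivity]] |].
  split; [apply in_Lt_multiple; [exact HM | exists i; split; [lia | reflexivity]] |].
  split; [apply Rmult_lt_compat_l; [exact Hx | apply Hdec; assumption] |].
  split; [| ring].
  intros l Hl. apply in_Lt_multiple in Hl as [q [Hq ->]]; [| exact HM].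
  destruct (mu_grid_not_between M i q HM Hi Hq); nra.
Qed.

Lemma in_Delta_S_near_dmu r eps : 0 <= r <= r0 a1 a2 t -> 0 < eps ->
  exists d, in_Delta_S a1 a2 t d /\ Rabs (d + INR a1 * INR a2 * dmu a1 a2 t r) < eps.
Proof.
  intros Hr Heps.
  destruct (r0_spec a1 a2 t a1_pos a1_lt_a2 t_gt1) as [Hr0 _].
  set (k := INR a1 * INR a2).
  assert (Hk : 0 < k) by (apply Rmult_lt_0_compat; apply lt_0_INR; lia).
  destruct (proj1 (filterlim_locally _ _) (dmu_continuous a1 a2 t a1_pos a1_lt_a2 t_gt1 r)
              (mkposreal (eps / k) (Rdiv_lt_0_compat _ _ Heps Hk))) as [delta Hdelta].
  pose proof (cond_pos delta).
  destruct (archimed_cor1 (Rmin (delta / 2) (r0 a1 a2 t))) as [M [HMinv HM]].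
  { apply Rmin_glb_lt; lra. }
  pose proof (Rmin_l (delta / 2) (r0 a1 a2 t)). pose proof (Rmin_r (delta / 2) (r0 a1 a2 t)).
  assert (HMR : 0 < INR M) by (apply lt_0_INR, HM).
  destruct (grid_index M r (r0 a1 a2 t) HM Hr) as [i [Hi Hri]]; [lra |].
  set (u := INR i / INR M) in Hri.
  assert (Hv : INR (S i) / INR M = u + / INR M) by (rewrite S_INR; unfold u; field; lra).
  assert (Hw : (INR i + 2) / INR M = u + 2 * / INR M) by (unfold u; field; lra).
  assert (Hu0 : 0 <= u) by (apply Rdiv_le_0_compat; [apply pos_INR | lra]).
  destruct (mu_mvt a1 a2 t a1_pos a1_lt_a2 t_gt1 u (u + / INR M)) as [c [Hc Hmvt]]; [lra .. |].
  exists (INR (a1 * a2 * M) * (mu a1 a2 t u - mu a1 a2 t (INR (S i) / INR M))).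
  split; [apply in_Delta_S_grid_step; [exact HM | exact Hi] |].
  rewrite Hv, !mult_INR. fold k.
  replace (k * INR M * (mu a1 a2 t u - mu a1 a2 t (u + / INR M)) + k * dmu a1 a2 t r)
    with (- (k * (dmu a1 a2 t c - dmu a1 a2 t r))).
  2:{ rewrite <- (Ropp_minus_distr (mu a1 a2 t (u + / INR M))), Hmvt. field. lra. }
  rewrite Rabs_Ropp, Rabs_mult, Rabs_pos_eq by lra.
  assert (Hclose : Rabs (dmu a1 a2 t c - dmu a1 a2 t r) < eps / k).
  { apply (Hdelta c). change (Rabs (c - r) < delta). apply Rabs_def1; lra. }
  apply (Rmult_lt_compat_l k) in Hclose; [| exact Hk].
  replace (k * (eps / k)) with eps in Hclose by (field; lra). exact Hclose.
Qed.

End Density.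

Theorem proposition2 (a1 a2 : nat) (t : R) :
  (1 < a1)%nat -> (a1 < a2)%nat -> Nat.gcd a1 a2 = 1%nat -> 1 < t ->
  forall y : R,
    Rabs (INR a1 * INR a2 * P a1 a2 t) <= y <= INR a2 ->
    forall eps : R, 0 < eps ->
      exists d : R, in_Delta_S a1 a2 t d /\ Rabs (d - y) < eps.
Proof.
  intros Ha1 Ha12 Hgcd Ht y Hy eps Heps.
  assert (Ha1_pos : (0 < a1)%nat) by lia.
  destruct (dmu_attains a1 a2 t Ha1_pos Ha12 Ht y Hy) as [r [Hr Hdr]].
  destruct (in_Delta_S_near_dmu a1 a2 t Ha1_pos Ha12 Hgcd Ht r eps Hr Heps) as [d [Hd Hclose]].
  exists d. split; [exact Hd |].
  rewrite Hdr in Hclose. exact Hclose.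
Qed.
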